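(* Let $\mathbb F$ be a field and $\gamma$ a permutation of $\mathbb F$ fixing both $0$ and $1$. Suppose that $\gamma$ normalizes both the groups $\Gamma(\mathbb F^\times)$ and $s\Gamma(\mathbb F^\times)s$, where $s$ is the permutation $x\mapsto -x+1$. Then $\gamma\in\mathrm{Aut}(\mathbb F)$.
   Context: $\Gamma(\mathbb F^\times)$ denotes the group of permutations of $\mathbb F$ of the form $x\mapsto ax$ with $a\in\mathbb F^\times$. $\mathrm{Aut}(\mathbb F)$ is the group of field automorphisms. *)

From mathcomp Require Import all_boot all_algebra.
Set Implicit Arguments. Unset Strict Implicit. Unset Printing Implicit Defensive.
Import GRing.Theory.
Local Open Scope ring_scope.

(* Permutations of F are represented as bijective functions F -> F;
   groups of permutations as predicates on functions F -> F,
   equality of permutations being pointwise equality. *)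

Definition Gamma_mul (F : fieldType) : (F -> F) -> Prop :=
  fun f => exists2 a : F, a != 0 & f =1 (fun x => a * x).

Definition sflip (F : fieldType) (x : F) : F := - x + 1.

Definition sGamma_s (F : fieldType) : (F -> F) -> Prop :=
  fun f => exists2 g, Gamma_mul g & f =1 (@sflip F \o g \o @sflip F).

(* gamma normalizes G, i.e. gamma G gamma^{-1} = G (for bijective gamma):
   every conjugate gamma g gamma^{-1} (g in G) lies in G, and every h in G
   is of that form. Written without the inverse as gamma \o g = h \o gamma. *)
Definition normalizes (F : fieldType) (gamma : F -> F)
    (G : (F -> F) -> Prop) : Prop :=
  (forall g, G g -> exists2 h, G h & gamma \o g =1 h \o gamma) /\
  (forall h, G h -> exists2 g, G g & gamma \o g =1 h \o gamma).

Definition field_aut (F : fieldType) (gamma : F -> F) : Prop :=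
  [/\ bijective gamma,
      (forall x y, gamma (x + y) = gamma x + gamma y),
      (forall x y, gamma (x * y) = gamma x * gamma y) &
      gamma 1 = 1].

From mathcomp Require Import all_boot all_algebra.
From mathcomp Require Import ring.
Set Implicit Arguments. Unset Strict Implicit. Unset Printing Implicit Defensive.
Import GRing.Theory.
Local Open Scope ring_scope.

(* Conjugating the dilation [x |-> a x] by [gamma] must give a dilation, and
   evaluating at [1] identifies it as [x |-> gamma a x]: so [gamma] is
   multiplicative. Since [s] is an involution, the same argument applied to
   [s Gamma s] shows that [s gamma s] is multiplicative as well. Writing
   [1 - x = - x (1 - x^-1)] and comparing the two multiplicativity relations
   yields [(1 - d) (d - gamma x) = 0] for [d = 1 - gamma (1 - x)], whence
   [gamma (1 - x) = 1 - gamma x]; then [gamma (x + y) = gamma x gamma (1 + y / x)]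
   gives additivity. *)

Definition conjugates_into (T : Type) (gamma : T -> T) (G : (T -> T) -> Prop) :=
  forall g, G g -> exists2 h, G h & gamma \o g =1 h \o gamma.

Lemma conjugates_into_conj (T : Type) (s gamma : T -> T) (G : (T -> T) -> Prop) :
    involutive s ->
    conjugates_into gamma (fun f => exists2 g, G g & f =1 s \o g \o s) ->
  conjugates_into (s \o gamma \o s) G.
Proof.
move=> sK NG g Gg.
have [h' [h Gh h'E] gamma_sgs] :=
  NG (s \o g \o s) (ex_intro2 _ (fun g' => _ =1 s \o g' \o s) g Gg (frefl _)).
exists h => // x; have := gamma_sgs (s x); rewrite /= h'E /= sK => ->.
by rewrite sK.
Qed.

Lemma conjugates_into_Gamma_mul_morphM (F : fieldType) (gamma : F -> F) :
    gamma 0 = 0 -> gamma 1 = 1 -> conjugates_into gamma (@Gamma_mul F) ->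
  {morph gamma : x y / x * y}.
Proof.
move=> g0 g1 NG a x; have [->|a0] := eqVneq a 0; first by rewrite !mul0r g0 mul0r.
have [h [b _ hb] gamma_h] := NG _ (ex_intro2 _ _ a a0 (frefl _)).
have := gamma_h 1; rewrite /= mulr1 hb g1 mulr1 => ->.
by have := gamma_h x; rewrite /= hb.
Qed.

Lemma sflipE (F : fieldType) (x : F) : sflip x = 1 - x.
Proof. by rewrite /sflip addrC. Qed.

Lemma sflipK (F : fieldType) : involutive (@sflip F).
Proof. by move=> x; rewrite !sflipE subKr. Qed.

Lemma morphM_inj_oppr (R : idomainType) (f : R -> R) :
    injective f -> f 1 = 1 -> {morph f : x y / x * y} -> {morph f : x / - x}.
Proof.
move=> f_inj f1 fM x; rewrite -mulN1r fM -[RHS]mulN1r; congr (_ * _).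
have /eqP : f (-1) ^+ 2 = 1 by rewrite expr2 -fM mulrNN mulr1.
rewrite sqrf_eq1 => /orP[/eqP fN1|/eqP //].
have N1E : -1 = 1 :> R by apply: f_inj; rewrite fN1 f1.
by rewrite N1E f1.
Qed.

Section SflipCommute.
Variables (F : fieldType) (gamma : F -> F).
Hypotheses (gamma_inj : injective gamma) (g0 : gamma 0 = 0) (g1 : gamma 1 = 1).
Hypothesis gM : {morph gamma : x y / x * y}.
Hypothesis sgsM : {morph (@sflip F \o gamma \o @sflip F) : x y / x * y}.

Lemma gamma_sflip x : gamma (sflip x) = sflip (gamma x).
Proof.
have [->|x0] := eqVneq x 0; first by rewrite !sflipE subr0 g0 subr0 g1.
have [->|x1] := eqVneq x 1; first by rewrite !sflipE g1 subrr g0.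
pose d y := sflip (gamma (sflip y)).
have dVd : d x^-1 * d x = 1.
  by rewrite -[_ * _]sgsM mulVf // /= !sflipE subrr g0 subr0.
have d_neq1 : d x != 1.
  apply: contra x1 => /eqP dx1.
  have : gamma (sflip x) = gamma 0.
    by rewrite -[gamma _]sflipK -/(d x) dx1 g0 sflipE subrr.
  by move/gamma_inj/(congr1 (@sflip F)); rewrite sflipK sflipE subr0 => ->.
have sflip_d : sflip (d x) = - gamma x * sflip (d x^-1).
  rewrite /d !sflipK -(morphM_inj_oppr gamma_inj g1 gM) -gM.
  by congr gamma; rewrite !sflipE; field.
suff : (1 - d x) * (d x - gamma x) = 0.
  move/eqP; rewrite mulf_eq0 subr_eq0 eq_sym (negbTE d_neq1) subr_eq0 => /eqP dE.
  by rewrite -dE /d sflipK.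
move: sflip_d dVd; rewrite !sflipE.
move: (d x) (d x^-1) (gamma x) => a b c sflip_a ba1.
have -> : (1 - a) * (a - c) = (1 - a) * a - c + c * a by ring.
rewrite sflip_a.
have -> : - c * (1 - b) * a - c + c * a = c * (b * a - 1) by ring.
by rewrite ba1 subrr mulr0.
Qed.

End SflipCommute.

Lemma sflip_morphD (F : fieldType) (f : F -> F) :
    f 0 = 0 -> {morph f : x / - x} -> {morph f : x y / x * y} ->
    (forall x, f (sflip x) = sflip (f x)) ->
  {morph f : x y / x + y}.
Proof.
move=> f0 fN fM f_sflip x y; have [->|x0] := eqVneq x 0; first by rewrite f0 !add0r.
have f1D z : f (1 + z) = 1 + f z.
  by have := f_sflip (- z); rewrite !sflipE fN !opprK.
have -> : x + y = x * (1 + y / x) by field.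
by rewrite fM f1D mulrDr mulr1 -fM; congr (_ + f _); field.
Qed.

Theorem corollary2p2 (F : fieldType) (gamma : F -> F) :
  bijective gamma -> gamma 0 = 0 -> gamma 1 = 1 ->
  normalizes gamma (@Gamma_mul F) -> normalizes gamma (@sGamma_s F) ->
  field_aut gamma.
Proof.
move=> gamma_bij g0 g1 [NGamma _] [NsGammas _].
have gamma_inj := bij_inj gamma_bij.
have gM := conjugates_into_Gamma_mul_morphM g0 g1 NGamma.
have sgsM : {morph (@sflip F \o gamma \o @sflip F) : x y / x * y}.
  apply: conjugates_into_Gamma_mul_morphM.
  - by rewrite /= !sflipE subr0 g1 subrr.
  - by rewrite /= !sflipE subrr g0 subr0.
  - exact: conjugates_into_conj (@sflipK F) NsGammas.
split=> //; apply: sflip_morphD => //.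
  exact: morphM_inj_oppr.
exact: gamma_sflip.
Qed.
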